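(* Let $R$ be a connected reduced order with universal grading $(\Gamma,(R_\gamma)_{\gamma\in\Gamma})$ and degree map $d\colon\mu\to\Gamma$. The map $\operatorname{Id}_0(d)\to\mathcal{D}(R)$ given by $f\mapsto\big(\bigoplus_{\gamma\in\ker(f)}R_\gamma,\ \operatorname{im}(f)\big)$ is well defined and is an isomorphism of partially ordered sets that respects the actions of $\operatorname{Aut}(R)$. Its inverse sends $(A,G)\in\mathcal{D}(R)$ to the homomorphism $f\colon\Gamma\to\mu$ determined as follows: $\Gamma=\Gamma_A\times d(G)$ where $\Gamma_A$ is the subgroup generated by $\{\gamma: R_\gamma\cap A\ne0\}$, $d$ restricts to an isomorphism $G\to d(G)$, and $f$ is trivial on $\Gamma_A$ and equals the inverse of this isomorphism on $d(G)$.
   Context: All rings have a unit element. An order is a commutative ring whose additive group is isomorphic to $\mathbb{Z}^n$; reduced means no non-zero nilpotents, connected means exactly two idempotents. $\mu=\mu(R)$ is the group of roots of unity. A grading of $R$ is a pair $(\Delta,(R_\delta)_\delta)$ with $\Delta$ an abelian group and $R_\delta$ additive subgroups such that $R_\gamma R_\delta\subset R_{\gamma\delta}$ and $\bigoplus_\delta R_\delta\to R$ is bijective; it is universal if every grading of $R$ is the pushforward $(E,(\sum_{\delta\in f^{-1}\epsilon}R_\delta)_\epsilon)$ along a unique homomorphism $f$ from its group. Every reduced order has a universal grading with finite group; for connected reduced $R$ every $\zeta\in\mu$ lies in $R_\gamma$ for a unique $\gamma$, and the degree map $d\colon\mu\to\Gamma$, $\zeta\mapsto\gamma$, is a homomorphism.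 $\operatorname{Id}_0(d)=\{f\in\operatorname{Hom}(\Gamma,\mu): f\circ d\circ f=f\}$, partially ordered by $f\leq g$ iff $f\circ d\circ g=g\circ d\circ f=f$. $\mathcal{D}(R)$ is the set of pairs $(A,G)$ with $A\subset R$ a subring and $G\subset R^*$ a subgroup such that the natural map from the group ring $A[G]$ to $R$ is an isomorphism, partially ordered by $(B,H)\leq(A,G)$ iff $H\subset G$ and $B\supset A$. $\operatorname{Aut}(R)$ acts on $\mathcal{D}(R)$ componentwise; each $\sigma\in\operatorname{Aut}(R)$ induces $\sigma_\Gamma\in\operatorname{Aut}(\Gamma)$ with $\sigma(R_\gamma)=R_{\sigma_\Gamma(\gamma)}$, and $\sigma$ acts on $\operatorname{Id}_0(d)$ by $f\mapsto\sigma|_\mu\circ f\circ\sigma_\Gamma^{-1}$. *)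

From mathcomp Require Import all_boot all_order all_algebra.
Set Implicit Arguments. Unset Strict Implicit. Unset Printing Implicit Defensive.
Import GRing.Theory.
Local Open Scope ring_scope.

(* Abelian groups Gamma, Delta are written additively as zmodTypes;
   subsets of R are predicates R -> Prop. *)

Section Defs.
Variable R : comNzRingType.

Definition mu (x : R) : Prop := exists n : nat, (0 < n)%N /\ x ^+ n = 1.

Definition is_order : Prop :=
  exists (n : nat) (phi : 'rV[int]_n -> R),
    (forall a b, phi (a - b) = phi a - phi b) /\ bijective phi.

Definition reduced : Prop := forall (x : R) (n : nat), x ^+ n = 0 -> x = 0.

Definition connected : Prop :=
  (0 : R) <> 1 /\ forall e : R, e * e = e -> e = 0 \/ e = 1.

Definition gsum (D : zmodType) (Sg : D -> R -> Prop) (P : D -> Prop) (x : R) : Prop :=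
  exists (s : seq D) (y : D -> R),
    (forall g, g \in s -> P g /\ Sg g (y g)) /\ x = \sum_(g <- s) y g.

Definition grading (D : zmodType) (Sg : D -> R -> Prop) : Prop :=
  [/\ (forall g, Sg g 0),
      (forall g x y, Sg g x -> Sg g y -> Sg g (x - y)),
      (forall g h x y, Sg g x -> Sg h y -> Sg (g + h) (x * y)),
      (forall x, gsum Sg (fun _ => True) x) &
      (forall (s : seq D) (y : D -> R), uniq s ->
         (forall g, g \in s -> Sg g (y g)) ->
         \sum_(g <- s) y g = 0 -> forall g, g \in s -> y g = 0)].

Definition additive_map (D E : zmodType) (f : D -> E) : Prop :=
  forall a b, f (a + b) = f a + f b.

Definition is_pushforward (D E : zmodType) (Sg : D -> R -> Prop) (f : D -> E)
  (Sf : E -> R -> Prop) : Prop :=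
  forall e x, Sf e x <-> gsum Sg (fun g => f g = e) x.

Definition universal_grading (G : zmodType) (Rg : G -> R -> Prop) : Prop :=
  grading Rg /\
  forall (E : zmodType) (Sg : E -> R -> Prop), grading Sg ->
    exists f : G -> E, [/\ additive_map f, is_pushforward Rg f Sg &
      (forall f' : G -> E, additive_map f' -> is_pushforward Rg f' Sg ->
        forall g, f' g = f g)].

Definition hom_mu (G : zmodType) (f : G -> R) : Prop :=
  (forall a b, f (a + b) = f a * f b) /\ (forall a, mu (f a)).

Definition Id0 (G : zmodType) (d : R -> G) (f : G -> R) : Prop :=
  hom_mu f /\ forall g, f (d (f g)) = f g.

Definition leId0 (G : zmodType) (d : R -> G) (f g : G -> R) : Prop :=
  forall c, f (d (g c)) = f c /\ g (d (f c)) = f c.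

Definition inD (A Gp : R -> Prop) : Prop :=
  [/\
      (A 1 /\ (forall x y, A x -> A y -> A (x - y)) /\
        (forall x y, A x -> A y -> A (x * y))),
      (Gp 1 /\ (forall x y, Gp x -> Gp y -> Gp (x * y)) /\
        (forall x, Gp x -> exists y, Gp y /\ x * y = 1)),
      (* A[G] -> R surjective *)
      (forall x, exists (s : seq R) (a : R -> R),
          (forall g, g \in s -> Gp g /\ A (a g)) /\ x = \sum_(g <- s) a g * g) &
      (* A[G] -> R injective *)
      (forall (s : seq R) (a : R -> R), uniq s ->
          (forall g, g \in s -> Gp g /\ A (a g)) ->
          \sum_(g <- s) a g * g = 0 -> forall g, g \in s -> a g = 0)].

Definition leD (B H A Gp : R -> Prop) : Prop :=
  (forall x, H x -> Gp x) /\ (forall x, A x -> B x).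

Definition Aof (G : zmodType) (Rg : G -> R -> Prop) (f : G -> R) : R -> Prop :=
  gsum Rg (fun g => f g = 1).
Definition Gof (G : zmodType) (f : G -> R) : R -> Prop :=
  fun x => exists g, f g = x.

Definition GammaA (G : zmodType) (Rg : G -> R -> Prop) (A : R -> Prop) (c : G) : Prop :=
  exists (s : seq G) (k : G -> int),
    (forall g, g \in s -> exists x, x <> 0 /\ Rg g x /\ A x) /\
    c = \sum_(g <- s) g *~ k g.

Definition same_set (P Q : R -> Prop) : Prop := forall x, P x <-> Q x.

End Defs.

From HB Require Import structures.
From mathcomp Require Import all_boot all_order all_algebra.
From mathcomp Require Import boolp.
Set Implicit Arguments. Unset Strict Implicit. Unset Printing Implicit Defensive.
Import GRing.Theory.
Local Open Scope ring_scope.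
Local Open Scope quotient_scope.

(* For f in Id_0(d) let A_f be the sum of the R_c with f c = 1.  A homogeneous x of
   degree e factors as (x * f (- e)) * f e, and x * f (- e) has degree e + d (f (- e)),
   on which f is 1; this gives R = A_f[im f].  Independence follows by comparing
   homogeneous components, because distinct elements of im f have degrees that differ
   modulo ker f.  Universality forces Gamma to be generated by the degrees of nonzero
   homogeneous elements (the quotient by that subgroup only carries the trivial
   grading), so a homomorphism Gamma -> mu is determined by its values on them; this
   gives injectivity and the order isomorphism.  Conversely, for (A, G) in D(R) the
   G-grading R_g = A g is a grading, so universality yields f : Gamma -> G.  G consists
   of roots of unity because R, free of finite rank over Z, contains no infinite
   Z-independent family of powers of a unit; f is the required inverse image. *)

Lemma big_fiber_seq (I T : eqType) (V : nmodType) (r : seq I) (u : seq T)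
    (f : I -> T) (F : I -> V) :
  uniq u -> {subset map f r <= u} ->
  \sum_(z <- u) \sum_(p <- r | f p == z) F p = \sum_(p <- r) F p.
Proof.
move=> uu fru; under eq_bigr do rewrite big_mkcond.
rewrite exchange_big /=; apply: eq_big_seq => p pr.
have fpu : f p \in u by apply: fru; apply: map_f.
rewrite -big_mkcond -big_filter.
under eq_filter do rewrite eq_sym.
by rewrite filter_pred1_uniq // big_seq1.
Qed.

Lemma undup_catl (T : eqType) (s t : seq T) : {subset s <= undup (s ++ t)}.
Proof. by move=> x xs; rewrite mem_undup mem_cat xs. Qed.

Lemma undup_catr (T : eqType) (s t : seq T) : {subset t <= undup (s ++ t)}.
Proof. by move=> x xt; rewrite mem_undup mem_cat xt orbT. Qed.

Section IntegerCombinations.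
Variables (G : zmodType) (P : G -> Prop).

Definition zcomb (c : G) : Prop :=
  exists (s : seq G) (k : G -> int),
    (forall g, g \in s -> P g) /\ c = \sum_(g <- s) g *~ k g.

Lemma zcomb0 : zcomb 0.
Proof. by exists [::], (fun=> 0); rewrite big_nil. Qed.

Lemma zcomb_gen g : P g -> zcomb g.
Proof.
move=> Pg; exists [:: g], (fun=> 1); rewrite big_seq1.
by split=> // h; rewrite inE => /eqP ->.
Qed.

Lemma sum_mulrz_fiber (s u : seq G) (k : G -> int) :
  uniq u -> {subset s <= u} ->
  \sum_(g <- s) g *~ k g = \sum_(g <- u) g *~ \sum_(h <- s | h == g) k h.
Proof.
move=> uu su; rewrite -(big_fiber_seq _ (f := id) uu); last by rewrite map_id.
by apply: eq_bigr => g _; rewrite mulrz_sumr; apply: eq_bigr => h /eqP ->.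
Qed.

Lemma zcombB a b : zcomb a -> zcomb b -> zcomb (a - b).
Proof.
move=> [s [k [Ps ->]]] [t [l [Pt ->]]].
pose u := undup (s ++ t); have uu : uniq u := undup_uniq _.
exists u, (fun g => \sum_(h <- s | h == g) k h - \sum_(h <- t | h == g) l h).
split=> [g|]; first by rewrite mem_undup mem_cat => /orP[/Ps|/Pt].
rewrite (sum_mulrz_fiber k uu (@undup_catl _ s t)).
rewrite (sum_mulrz_fiber l uu (@undup_catr _ s t)) -sumrB.
by apply: eq_bigr => g _; rewrite mulrzBr.
Qed.

Lemma zcomb_ind (Q : G -> Prop) :
  Q 0 -> (forall a b, Q a -> Q b -> Q (a - b)) -> (forall g, P g -> Q g) ->
  forall c, zcomb c -> Q c.
Proof.
move=> Q0 QB QP c [s [k [Ps ->]]].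
have QN a : Q a -> Q (- a) by move=> Qa; rewrite -sub0r; apply: QB.
have QD a b : Q a -> Q b -> Q (a + b) by move=> Qa Qb; rewrite -[b]opprK; apply/QB/QN.
have QMn a n : Q a -> Q (a *+ n).
  by move=> Qa; elim: n => [|n IHn]; rewrite ?mulr0n // mulrS; apply: QD.
have QMz a m : Q a -> Q (a *~ m) by case: m => n Qa; [|apply: QN]; apply: QMn.
elim: s Ps => [|g s IHs] Ps; first by rewrite big_nil.
rewrite big_cons; apply: QD; first by apply/QMz/QP/Ps; rewrite inE eqxx.
by apply: IHs => h hs; apply: Ps; rewrite inE hs orbT.
Qed.

Definition zspan : {pred G} := fun c => `[< zcomb c >].

Lemma zspan_zmod_closed : zmod_closed zspan.
Proof.
split=> [|a b /asboolP za /asboolP zb]; apply/asboolP; first exact: zcomb0.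
exact: zcombB.
Qed.

End IntegerCombinations.

HB.instance Definition _ (G : zmodType) (P : G -> Prop) :=
  GRing.isZmodClosed.Build G (zspan P) (zspan_zmod_closed P).

Section Grading.
Variables (R : comNzRingType) (Gam : zmodType) (Rg : Gam -> R -> Prop).
Hypothesis Rg_grading : grading Rg.

Lemma homog0 g : Rg g 0.
Proof. by case: Rg_grading. Qed.

Lemma homogB g x y : Rg g x -> Rg g y -> Rg g (x - y).
Proof. by case: Rg_grading => _ HB _ _ _; apply: HB. Qed.

Lemma homogD g x y : Rg g x -> Rg g y -> Rg g (x + y).
Proof.
by move=> hx hy; rewrite -[y]opprK -[- y]sub0r; apply/(homogB hx)/homogB/hy/homog0.
Qed.

Lemma homogM g h x y : Rg g x -> Rg h y -> Rg (g + h) (x * y).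
Proof. by case: Rg_grading => _ _ HM _ _; apply: HM. Qed.

Lemma homog_sum g (I : Type) (r : seq I) (P : pred I) (F : I -> R) :
  (forall i, P i -> Rg g (F i)) -> Rg g (\sum_(i <- r | P i) F i).
Proof. by move=> HF; elim/big_ind: _ => //; [apply: homog0 | apply: homogD]. Qed.

Definition restr (s : seq Gam) (y : Gam -> R) g := if g \in s then y g else 0.

Lemma big_restr (s u : seq Gam) (y : Gam -> R) : uniq s -> uniq u -> {subset s <= u} ->
  \sum_(g <- u) restr s y g = \sum_(g <- s) y g.
Proof.
move=> us uu su; rewrite -big_mkcond -big_filter; apply/perm_big/uniq_perm => //.
  by rewrite filter_uniq.
by move=> g; rewrite mem_filter andb_idr //; apply: su.
Qed.

Lemma homog_restr s y g : (forall g, g \in s -> Rg g (y g)) -> Rg g (restr s y g).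
Proof. by rewrite /restr; case: ifP => [gs /(_ g gs) | _ _] //; apply: homog0. Qed.

Definition decomp (x : R) (s : seq Gam) (y : Gam -> R) :=
  [/\ uniq s, forall g, g \in s -> Rg g (y g) & x = \sum_(g <- s) y g].

Lemma decomp_exists x : exists p : seq Gam * (Gam -> R), decomp x p.1 p.2.
Proof.
case: Rg_grading => _ _ _ Hspan _; have [s [y [Hy ->]]] := Hspan x.
exists (undup s, fun g => \sum_(h <- s | h == g) y h); split=> //=.
- exact: undup_uniq.
- move=> g _; rewrite big_seq_cond; apply: homog_sum => h /andP[hs /eqP <-].
  by case: (Hy h hs).
- by rewrite big_fiber_seq ?undup_uniq // map_id => g; rewrite mem_undup.
Qed.

Lemma decomp_unique x s y t z : decomp x s y -> decomp x t z ->
  forall g, restr s y g = restr t z g.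
Proof.
move=> [us Rs xs] [ut Rt xt] g; case: Rg_grading => _ _ _ _ Hfree.
pose u := undup (s ++ t).
have [gu | ] := boolP (g \in u); last first.
  rewrite mem_undup mem_cat negb_or => /andP[gs gt].
  by rewrite /restr (negbTE gs) (negbTE gt).
apply/eqP; rewrite -subr_eq0; apply/eqP.
apply: (Hfree u (fun h => restr s y h - restr t z h)) => //; first exact: undup_uniq.
  by move=> h _; apply: homogB; apply: homog_restr.
have [su tu] := (@undup_catl _ s t, @undup_catr _ s t).
by rewrite sumrB !big_restr ?undup_uniq // -xs -xt subrr.
Qed.

Definition decomposition x := projT1 (cid (decomp_exists x)).

Lemma decompositionP x : decomp x (decomposition x).1 (decomposition x).2.
Proof. exact: projT2 (cid (decomp_exists x)). Qed.

Definition hcomp (c : Gam) (x : R) : R :=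
  restr (decomposition x).1 (decomposition x).2 c.

Lemma hcompE x s y c : decomp x s y -> hcomp c x = restr s y c.
Proof. by move=> dx; apply: (decomp_unique (decompositionP x) dx). Qed.

Lemma homog_hcomp c x : Rg c (hcomp c x).
Proof. by apply: homog_restr; case: (decompositionP x). Qed.

Lemma hcomp_homog e x c : Rg e x -> hcomp c x = if c == e then x else 0.
Proof.
move=> Rx; rewrite (@hcompE x [:: e] (fun=> x)) /restr ?inE //.
by split=> [|g|] //; rewrite ?big_seq1 // inE => /eqP ->.
Qed.

Lemma hcomp_id c x : Rg c x -> hcomp c x = x.
Proof. by move=> Rx; rewrite (hcomp_homog c Rx) eqxx. Qed.

Lemma hcomp_expand x : exists s : seq Gam, x = \sum_(g <- s) hcomp g x.
Proof.
case: (decompositionP x) => _ _ xs; exists (decomposition x).1.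
by rewrite [LHS]xs big_seq [RHS]big_seq; apply: eq_bigr => g gs; rewrite /hcomp /restr gs.
Qed.

Lemma hcomp_is_zmod_morphism c : zmod_morphism (hcomp c).
Proof.
move=> x y; case: (decompositionP x) (decompositionP y) => us Rs xs [ut Rt yt].
set s := (decomposition x).1 in us Rs xs *; set a := (decomposition x).2 in Rs xs *.
set t := (decomposition y).1 in ut Rt yt *; set b := (decomposition y).2 in Rt yt *.
pose u := undup (s ++ t).
rewrite (@hcompE _ u (fun g => restr s a g - restr t b g)).
  rewrite /hcomp -/s -/a -/t -/b /restr; case: ifP => // /negbT.
  by rewrite mem_undup mem_cat negb_or => /andP[/negbTE-> /negbTE->]; rewrite subr0.
split=> [|g _|]; first exact: undup_uniq.
  by apply: homogB; apply: homog_restr.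
have [su tu] := (@undup_catl _ s t, @undup_catr _ s t).
by rewrite sumrB !big_restr ?undup_uniq // -xs -yt.
Qed.

HB.instance Definition _ c :=
  GRing.isZmodMorphism.Build R R (hcomp c) (hcomp_is_zmod_morphism c).

Lemma hcomp_eq0 x : (forall c, hcomp c x = 0) -> x = 0.
Proof. by move=> H; case: (hcomp_expand x) => s ->; apply: big1 => g _. Qed.

Lemma homog_deg_unique a b x : x <> 0 -> Rg a x -> Rg b x -> a = b.
Proof.
move=> nx Ra Rb; have := hcomp_homog a Rb; rewrite hcomp_id //.
by case: eqP.
Qed.

Lemma gsumP (P : Gam -> Prop) x : gsum Rg P x <-> forall c, ~ P c -> hcomp c x = 0.
Proof.
split=> [[s [y [Hy ->]]] c nPc | H].
  rewrite raddf_sum /= big_seq; apply: big1 => g gs; have [Pg Ry] := Hy g gs.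
  by rewrite (hcomp_homog c Ry); case: eqP => // cg; case: nPc; rewrite cg.
have [s xs] := hcomp_expand x.
exists [seq g <- s | hcomp g x != 0], (fun g => hcomp g x); split.
  move=> g; rewrite mem_filter => /andP[nz _]; split; last exact: homog_hcomp.
  by apply: contrapT => nP; move: nz; rewrite H ?eqxx.
by rewrite big_filter big_mkcond [LHS]xs; apply: eq_bigr => g _; case: eqP.
Qed.

Lemma hcompMr e z c x : Rg e z -> hcomp c (x * z) = hcomp (c - e) x * z.
Proof.
move=> Rz; have [s xs] := hcomp_expand x.
rewrite [in LHS]xs [in RHS]xs mulr_suml !raddf_sum /= mulr_suml; apply: eq_bigr => g _.
rewrite (hcomp_homog c (homogM (homog_hcomp g x) Rz)) (hcomp_homog (c - e) (homog_hcomp g x)).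
by rewrite subr_eq; case: eqP; rewrite ?mul0r.
Qed.

End Grading.

Definition deg_support (R : comNzRingType) (Gam : zmodType) (Rg : Gam -> R -> Prop) g :=
  exists x, x <> 0 /\ Rg g x.

Definition deg_supportA (R : comNzRingType) (Gam : zmodType) (Rg : Gam -> R -> Prop)
    (A : R -> Prop) g :=
  exists x, x <> 0 /\ Rg g x /\ A x.

Lemma GammaAE (R : comNzRingType) (Gam : zmodType) (Rg : Gam -> R -> Prop) (A : R -> Prop) :
  GammaA Rg A = zcomb (deg_supportA Rg A).
Proof. by []. Qed.

Section Generation.
Variables (R : comNzRingType) (Gam : zmodType) (Rg : Gam -> R -> Prop).
Hypothesis Rg_grading : grading Rg.

Definition trivial_grading (E : zmodType) (e : E) (x : R) : Prop := e = 0 \/ x = 0.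

Lemma trivial_gradingP (E : zmodType) : grading (@trivial_grading E).
Proof.
split.
- by move=> e; right.
- by move=> e x y [->|->] [ye|->]; [left | left | left | right; rewrite subr0].
- by move=> e h x y [->|->] [->|->]; rewrite ?addr0 ?mulr0 ?mul0r; [left|right|right|right].
- move=> x; exists [:: 0], (fun=> x); rewrite big_seq1; split=> // e.
  by rewrite inE => /eqP ->; split=> //; left.
- move=> s y us Hy S0 e es; case: (Hy e es) => [e0|//]; move: S0.
  rewrite (bigD1_seq e) //= big1_seq ?addr0 // => h /andP[he hs].
  by case: (Hy h hs) => // h0; rewrite h0 -e0 eqxx in he.
Qed.

Lemma pushforward_trivial (E : zmodType) (f : Gam -> E) :
  (forall c, deg_support Rg c -> f c = 0) -> is_pushforward Rg f (@trivial_grading E).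
Proof.
move=> f_supp e x; rewrite (gsumP Rg_grading); split.
  move=> [-> c fc | -> c _]; last exact: raddf0.
  apply: contrapT => nz; apply: fc; apply: f_supp.
  by exists (hcomp Rg_grading c x); split=> //; apply: homog_hcomp.
move=> H; have [e0 | ne] := pselect (e = 0); [by left | right].
apply: (@hcomp_eq0 _ _ _ Rg_grading) => c; apply: contrapT => nz.
apply/nz/H => fc; apply/ne; rewrite -fc; apply: f_supp.
by exists (hcomp Rg_grading c x); split=> //; apply: homog_hcomp.
Qed.

(* Universality applied to the quotient by the subgroup generated by the support:
   the projection and the zero map both push [Rg] forward to the trivial grading. *)
Lemma universal_grading_generated : universal_grading Rg ->
  forall c, zcomb (deg_support Rg) c.
Proof.
move=> [_ HU] c; pose Q := Quotient.quot (zspan (deg_support Rg)).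
have [F [_ _ F_unique]] := HU Q _ (trivial_gradingP Q).
have push0 := @pushforward_trivial Q (fun=> 0) (fun _ _ => erefl).
have pushpi : is_pushforward Rg \pi_Q (@trivial_grading Q).
  apply: pushforward_trivial => g sg; apply/eqP; rewrite -(raddf0 \pi_Q).
  by rewrite -Quotient.idealrBE subr0; apply/asboolP/zcomb_gen.
have : c - 0 \in zspan (deg_support Rg).
  rewrite Quotient.idealrBE raddf0; apply/eqP.
  by rewrite (F_unique _ (raddfD \pi_Q) pushpi) -(F_unique _ _ push0) // => a b; rewrite addr0.
by rewrite subr0 => /asboolP.
Qed.

End Generation.

Section RootsOfUnity.
Variable R : comNzRingType.

Lemma mu1 : mu (1 : R).
Proof. by exists 1%N; rewrite expr1. Qed.

Lemma muM (z w : R) : mu z -> mu w -> mu (z * w).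
Proof.
move=> [n [n0 zn]] [m [m0 wm]]; exists (n * m)%N; split; first by rewrite muln_gt0 n0.
by rewrite exprMn exprM zn expr1n mulnC exprM wm expr1n mulr1.
Qed.

Lemma mu_unit (z : R) : mu z -> exists w, z * w = 1.
Proof. by move=> [n [n0 zn]]; exists (z ^+ n.-1); rewrite -exprS prednK. Qed.

Lemma mu_neq0 (z : R) : (0 : R) <> 1 -> mu z -> z <> 0.
Proof. by move=> R01 [n [n0 zn]] z0; apply: R01; rewrite -zn z0 expr0n; case: n n0 {zn}. Qed.

Lemma unit_pow_mu (g w : R) (i j : nat) : g * w = 1 -> (i < j)%N -> g ^+ i = g ^+ j -> mu g.
Proof.
move=> gw ij e; exists (j - i)%N; split; first by rewrite subn_gt0.
have wi : g ^+ i * w ^+ i = 1 by rewrite -exprMn gw expr1n.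
by rewrite -[LHS]mul1r -wi mulrAC -exprD subnKC 1?ltnW // -e wi.
Qed.

Lemma inv_unique (a b c : R) : a * c = 1 -> b * c = 1 -> a = b.
Proof. by move=> ac bc; rewrite -[a]mulr1 -bc mulrA (mulrC a) -mulrA ac mulr1. Qed.

Section HomMu.
Variables (Gam : zmodType) (f : Gam -> R).
Hypothesis f_hom : hom_mu f.

Lemma hom_muD a b : f (a + b) = f a * f b. Proof. by case: f_hom. Qed.
Lemma hom_mu_mu a : mu (f a). Proof. by case: f_hom. Qed.

Lemma hom_mu0 : f 0 = 1.
Proof.
have [w fw] := mu_unit (hom_mu_mu 0).
by rewrite -fw -{2}[0]addr0 hom_muD -mulrA fw mulr1.
Qed.

Lemma hom_muN c : f c * f (- c) = 1. Proof. by rewrite -hom_muD subrr hom_mu0. Qed.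

Lemma hom_mu_twistK c x : x * f (- c) * f c = x.
Proof. by rewrite -mulrA (mulrC (f _)) hom_muN mulr1. Qed.

End HomMu.

Lemma hom_mu_cst1 (Gam : zmodType) : hom_mu (fun _ : Gam => 1 : R).
Proof. by split=> [a b|a]; [rewrite mulr1 | apply: mu1]. Qed.

Lemma eq_hom_mu_zcomb (Gam : zmodType) (P : Gam -> Prop) (f g : Gam -> R) :
  hom_mu f -> hom_mu g -> (forall c, P c -> f c = g c) ->
  forall c, zcomb P c -> f c = g c.
Proof.
move=> hf hg fgP; apply: zcomb_ind => [|a b fga fgb|//]; first by rewrite !hom_mu0.
rewrite !hom_muD // fga; congr (_ * _).
by apply: (@inv_unique _ _ (g b)); rewrite mulrC ?hom_muN // -fgb hom_muN.
Qed.

End RootsOfUnity.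

Section DegreeMap.
Variables (R : comNzRingType) (Gam : zmodType) (Rg : Gam -> R -> Prop) (d : R -> Gam).
Hypotheses (Rg_grading : grading Rg) (R01 : (0 : R) <> 1).
Hypothesis d_deg : forall z, mu z -> Rg (d z) z.

Local Notation hc := (hcomp Rg_grading).

Lemma degM z w : mu z -> mu w -> d (z * w) = d z + d w.
Proof.
move=> mz mw; have mzw := muM mz mw.
have Rzw := homogM Rg_grading (d_deg mz) (d_deg mw).
exact: homog_deg_unique (mu_neq0 R01 mzw) (d_deg mzw) Rzw.
Qed.

Lemma deg1 : d 1 = 0.
Proof. by apply: (@addrI _ (d 1)); rewrite addr0 -degM ?mulr1 //; apply: mu1. Qed.

Lemma hom_mu_comp_deg (f g : Gam -> R) : hom_mu f -> hom_mu g -> hom_mu (fun c => f (d (g c))).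
Proof.
move=> hf hg; split=> [a b|a]; last exact: hom_mu_mu.
by rewrite (hom_muD hg) (degM (hom_mu_mu hg a) (hom_mu_mu hg b)) (hom_muD hf).
Qed.

Lemma AofP f y : Aof Rg f y <-> forall c, f c <> 1 -> hc c y = 0.
Proof. exact: gsumP. Qed.

Lemma Aof_homog f e y : Rg e y -> f e = 1 -> Aof Rg f y.
Proof.
move=> Ry fe; exists [:: e], (fun=> y); rewrite big_seq1.
by split=> // g; rewrite inE => /eqP ->.
Qed.

Lemma Aof_deg f e y : Aof Rg f y -> y <> 0 -> Rg e y -> f e = 1.
Proof.
move=> /AofP Ay ny Ry; apply: contrapT => fe; apply: ny.
by rewrite -(hcomp_id Rg_grading Ry); apply: Ay.
Qed.

Section Idempotent.
Variable f : Gam -> R.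
Hypothesis f_Id0 : Id0 d f.
Let f_hom : hom_mu f := proj1 f_Id0.

Lemma Id0_fix c : f (d (f c)) = f c.
Proof. by case: f_Id0. Qed.

Lemma Id0_deg1 : f (d 1) = 1.
Proof. by have := Id0_fix 0; rewrite (hom_mu0 f_hom). Qed.

Lemma Gof_fix z : Gof f z -> f (d z) = z.
Proof. by move=> [c <-]; apply: Id0_fix. Qed.

Lemma Gof_mu z : Gof f z -> mu z.
Proof. by move=> [c <-]; apply: (hom_mu_mu f_hom). Qed.

Lemma homog_twist e x : Rg e x -> Rg (e + d (f (- e))) (x * f (- e)).
Proof. by move=> Rx; exact: (homogM Rg_grading Rx (d_deg (hom_mu_mu f_hom (- e)))). Qed.

Lemma Id0_twist e : f (e + d (f (- e))) = 1.
Proof. by rewrite (hom_muD f_hom) Id0_fix (hom_muN f_hom). Qed.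

Lemma Aof_twist e x : Rg e x -> Aof Rg f (x * f (- e)).
Proof. by move=> Rx; apply: Aof_homog (homog_twist Rx) (Id0_twist e). Qed.

Lemma Aof_subring : [/\ Aof Rg f 1, (forall x y, Aof Rg f x -> Aof Rg f y -> Aof Rg f (x - y))
  & (forall x y, Aof Rg f x -> Aof Rg f y -> Aof Rg f (x * y))].
Proof.
split=> [|x y /AofP Ax /AofP Ay|x y /AofP Ax /AofP Ay].
- exact: (Aof_homog (d_deg (mu1 R)) Id0_deg1).
- by apply/AofP => c fc; rewrite raddfB /= Ax // Ay // subr0.
apply/AofP => c fc; have [s ->] := hcomp_expand Rg_grading x.
have [t ->] := hcomp_expand Rg_grading y.
rewrite mulr_suml raddf_sum /=; apply: big1 => a _.
rewrite mulr_sumr raddf_sum /=; apply: big1 => b _.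
rewrite (hcomp_homog _ c (homogM Rg_grading (homog_hcomp _ a x) (homog_hcomp _ b y))).
case: eqP fc => // -> fab; have [fa | /Ax ->] := pselect (f a = 1); last by rewrite mul0r.
rewrite Ay ?mulr0 // => fb; apply: fab; by rewrite (hom_muD f_hom) fa fb mulr1.
Qed.

Lemma Gof_group : [/\ Gof f 1, (forall x y, Gof f x -> Gof f y -> Gof f (x * y))
  & (forall x, Gof f x -> exists y, Gof f y /\ x * y = 1)].
Proof.
split=> [|_ _ [a <-] [b <-]|_ [a <-]]; first by exists 0; apply: (hom_mu0 f_hom).
  by exists (a + b); apply: (hom_muD f_hom).
by exists (f (- a)); split; [exists (- a) | apply: (hom_muN f_hom)].
Qed.

Lemma Id0_spanning x : exists (s : seq R) (a : R -> R),
  (forall z, z \in s -> Gof f z /\ Aof Rg f (a z)) /\ x = \sum_(z <- s) a z * z.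
Proof.
have [s xs] := hcomp_expand Rg_grading x.
exists (undup (map f s)), (fun z => \sum_(c <- s | f c == z) hc c x * f (- c)); split.
  move=> z; rewrite mem_undup => /mapP[c cs ->]; split; first by exists c.
  apply/AofP => e fe; rewrite raddf_sum /=; apply: big1 => b _.
  by move/AofP: (Aof_twist (homog_hcomp Rg_grading b x)); apply.
rewrite [LHS]xs -(@big_fiber_seq _ _ _ s (undup (map f s)) f (fun c => hc c x)) ?undup_uniq //;
  last by move=> z; rewrite mem_undup.
apply: eq_bigr => z _; rewrite mulr_suml; apply: eq_bigr => c /eqP <-.
by rewrite (hom_mu_twistK f_hom).
Qed.

Lemma Aof_hcomp_shift a z w c : Aof Rg f a -> Gof f z -> Gof f w -> f c = 1 -> z != w ->
  hc (c + d w) (a * z) = 0.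
Proof.
move=> /AofP Aa Gz Gw fc zw; rewrite (hcompMr _ _ _ (d_deg (Gof_mu Gz))) Aa ?mul0r //.
rewrite !(hom_muD f_hom) Gof_fix // fc mul1r => wz1.
move/eqP: zw; apply; apply: (@inv_unique _ z w (f (- d z))) => //.
by rewrite -{1}(Gof_fix Gz) (hom_muN f_hom).
Qed.

Lemma Id0_free (s : seq R) (a : R -> R) : uniq s ->
  (forall z, z \in s -> Gof f z /\ Aof Rg f (a z)) ->
  \sum_(z <- s) a z * z = 0 -> forall z, z \in s -> a z = 0.
Proof.
move=> us Hs S0 w ws; have [[cw fcw] Aw] := Hs w ws.
apply: (@hcomp_eq0 _ _ _ Rg_grading) => c.
have [fc | nfc] := pselect (f c = 1); last by move/AofP: Aw; apply.
have := congr1 (hc (c + d w)) S0; rewrite raddf_sum raddf0 /= (bigD1_seq w) //=.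
rewrite big1_seq ?addr0 => [|z /andP[zw zs]]; last first.
  by have [Gz Az] := Hs z zs; apply: Aof_hcomp_shift; rewrite // -fcw; exists cw.
rewrite (hcompMr _ _ _ (d_deg (Gof_mu (ex_intro _ cw fcw)))) addrK -fcw => e.
by rewrite -[LHS](hom_mu_twistK f_hom (- cw)) opprK e mul0r.
Qed.

Lemma Id0_inD : inD (Aof Rg f) (Gof f).
Proof.
have [A1 AB AM] := Aof_subring; have [G1 GM GV] := Gof_group.
by split; [| |exact: Id0_spanning|exact: Id0_free].
Qed.

End Idempotent.
End DegreeMap.

Section Automorphisms.
Variables (R : comNzRingType) (Gam : zmodType) (Rg : Gam -> R -> Prop).
Variables (sigma : {rmorphism R -> R}) (sG sGi : Gam -> Gam).
Hypotheses (sigma_bij : bijective sigma) (sGK : cancel sG sGi) (sGiK : cancel sGi sG).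
Hypothesis sigma_deg : forall c x, Rg c x <-> Rg (sG c) (sigma x).

Lemma Aof_aut f : same_set (Aof Rg (fun c => sigma (f (sGi c))))
  (fun x => exists y, Aof Rg f y /\ x = sigma y).
Proof.
have [tau sigmaK tauK] := sigma_bij; move=> x; split.
  move=> [s [y [Hy ->]]]; exists (\sum_(g <- map sGi s) tau (y (sG g))); split.
    exists (map sGi s), (fun g => tau (y (sG g))); split=> // _ /mapP[h hs ->].
    rewrite sGiK; have [fh Rh] := Hy h hs; split.
      by apply: (can_inj sigmaK); rewrite rmorph1.
    by apply/(sigma_deg _ _).2; rewrite sGiK tauK.
  by rewrite rmorph_sum big_map; apply: eq_bigr => g _; rewrite sGiK tauK.
move=> [_ [[s [z [Hz ->]]] ->]]; exists (map sG s), (fun g => sigma (z (sGi g))).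
split; last by rewrite rmorph_sum big_map; apply: eq_bigr => g _; rewrite sGK.
move=> _ /mapP[h hs ->]; rewrite sGK; have [fh Rh] := Hz h hs.
by split; [rewrite fh rmorph1 | apply/(sigma_deg _ _).1].
Qed.

Lemma Gof_aut f : same_set (Gof (fun c => sigma (f (sGi c))))
  (fun x => exists y, Gof f y /\ x = sigma y).
Proof.
move=> x; split=> [[c <-] | [_ [[c <-] ->]]]; last by exists (sG c); rewrite sGK.
by exists (f (sGi c)); split=> //; exists (sGi c).
Qed.

End Automorphisms.

Lemma inD_two_terms (R : comNzRingType) (A Gp : R -> Prop) (a b g h : R) :
  inD A Gp -> Gp g -> Gp h -> A a -> A b -> g != h -> a * g = b * h -> a = 0.
Proof.
move=> [[A1 [AB _]] _ _ free] Gg Gh Aa Ab gh agbh.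
have A0 : A 0 by rewrite -(subrr 1); apply: AB.
have ANb : A (- b) by rewrite -sub0r; apply: AB.
have uniq_gh : uniq [:: g; h] by rewrite /= inE gh.
have coefs r : r \in [:: g; h] -> Gp r /\ A (if r == g then a else - b).
  by rewrite !inE => /orP[]/eqP->; rewrite ?eqxx // eq_sym (negbTE gh).
have := free _ _ uniq_gh coefs.
rewrite big_cons big_seq1 eqxx eq_sym (negbTE gh) mulNr agbh subrr.
by move=> /(_ erefl g); rewrite inE eqxx; apply.
Qed.

Section Injectivity.
Variables (R : comNzRingType) (Gam : zmodType) (Rg : Gam -> R -> Prop) (d : R -> Gam).
Hypotheses (Rg_grading : grading Rg) (R01 : (0 : R) <> 1).
Hypothesis d_deg : forall z, mu z -> Rg (d z) z.
Hypothesis Rg_gen : forall c, zcomb (deg_support Rg) c.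

Lemma Id0_inj f g : Id0 d f -> Id0 d g ->
  same_set (Aof Rg f) (Aof Rg g) -> same_set (Gof f) (Gof g) -> forall c, f c = g c.
Proof.
move=> If Ig SA SG c; apply: (eq_hom_mu_zcomb (proj1 If) (proj1 Ig) _ (Rg_gen c)).
move=> e [x [nx Rx]]; apply: contrapT => /eqP fg; apply: nx.
have Af := Aof_twist Rg_grading d_deg If Rx.
have Ag : Aof Rg f (x * g (- e)) by apply/SA; exact: (Aof_twist Rg_grading d_deg Ig Rx).
have Gg : Gof f (g e) by apply/SG; exists e.
have := inD_two_terms (Id0_inD Rg_grading d_deg If) (ex_intro _ e erefl) Gg Af Ag fg.
rewrite !(hom_mu_twistK (proj1 If)) (hom_mu_twistK (proj1 Ig)) => /(_ erefl) x0.
by rewrite -(hom_mu_twistK (proj1 If) e x) x0 !mul0r.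
Qed.

Lemma leId0_leD f g : Id0 d f -> Id0 d g ->
  leId0 d f g <-> leD (Aof Rg f) (Gof f) (Aof Rg g) (Gof g).
Proof.
move=> If Ig; have [hf hg] := (proj1 If, proj1 Ig); split.
  move=> fg; split=> [x [c <-] | y [s [z [Hz ->]]]]; first by exists (d (f c)); case: (fg c).
  exists s, z; split=> // c cs; have [gc Rz] := Hz c cs; split=> //.
  by have [<- _] := fg c; rewrite gc (Id0_deg1 If).
move=> [GfGg AgAf] c; split; last first.
  have [c' <-] : Gof g (f c) by apply: GfGg; exists c.
  exact: (Id0_fix Ig).
apply: (eq_hom_mu_zcomb (hom_mu_comp_deg Rg_grading R01 d_deg hf hg) hf _ (Rg_gen c)).
move=> e [x [nx Rx]].
have Af : Aof Rg f (x * g (- e)) by apply/AgAf; exact: (Aof_twist Rg_grading d_deg Ig Rx).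
have nx' : x * g (- e) <> 0 by move=> x0; apply: nx; rewrite -(hom_mu_twistK hg e x) x0 mul0r.
have := Aof_deg Rg_grading Af nx' (homog_twist Rg_grading d_deg Ig Rx).
rewrite (hom_muD hf) => fe; apply: (@inv_unique _ _ _ (f (d (g (- e))))) => //.
rewrite -(hom_muD hf) -(degM Rg_grading R01 d_deg (hom_mu_mu hg _) (hom_mu_mu hg _)).
by rewrite (hom_muN hg) (Id0_deg1 If).
Qed.

End Injectivity.

Lemma rV_rat_scale n (u : 'rV[rat]_n) :
  exists2 a : int, a != 0 & exists m : 'rV[int]_n, map_mx intr m = a%:~R *: u.
Proof.
pose a := \prod_j denq (u 0 j); exists a; first by apply/prodf_neq0 => j _; apply: denq_neq0.
exists (map_mx numq (a%:~R *: u)); apply/rowP => j; rewrite !mxE numqK // Qint_def.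
by rewrite /a (bigD1 j) //= rmorphM mulrC mulrA -numqE -rmorphM denq_int.
Qed.

Lemma int_mx_dependent n (M : 'M[int]_(n.+1, n)) : exists2 m : 'rV_n.+1, m != 0 & m *m M = 0.
Proof.
pose Mq := map_mx intr M : 'M[rat]_(n.+1, n).
have : kermx Mq != 0.
  by rewrite kermx_eq0 /row_free neq_ltn ltnS rank_leq_col.
rewrite -nz_row_eq0; set u := nz_row _ => u0.
have uM : u *m Mq = 0 by apply/sub_kermxP; apply: nz_row_sub.
have [a a0 [m mE]] := rV_rat_scale u; exists m.
  apply: contraNneq u0 => m0; move: mE; rewrite m0 map_mx0 => /esym/eqP.
  by rewrite scaler_eq0 intr_eq0 (negbTE a0).
apply/matrixP => i j; rewrite [RHS]mxE; apply/eqP; rewrite -(intr_eq0 rat).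
have := congr1 (fun B : 'M[rat]_(1, n) => B i j) (map_mxM (intr : int -> rat) m M).
by rewrite /= mE -scalemxAl uM scaler0 [LHS]mxE [RHS]mxE => ->.
Qed.

Section FreeZModule.
Variables (R : comNzRingType) (n : nat) (phi : 'rV[int]_n -> R).
Hypotheses (phiB : zmod_morphism phi) (phi_bij : bijective phi).

HB.instance Definition _ := GRing.isZmodMorphism.Build _ _ phi phiB.

Lemma free_torsion_free (x : R) (m : int) : m != 0 -> x *~ m = 0 -> x = 0.
Proof.
have [psi phiK psiK] := phi_bij; move=> m0.
rewrite -[x]psiK -raddfMz -(raddf0 phi) => /(can_inj phiK) /eqP.
by rewrite -scaler_int scalemx_eq0 intz (negbTE m0) => /eqP ->.
Qed.

Lemma free_dependent (x : 'I_n.+1 -> R) :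
  exists2 m : 'I_n.+1 -> int, (exists j, m j != 0) & \sum_j x j *~ m j = 0.
Proof.
have [psi phiK psiK] := phi_bij.
pose M := \matrix_(j, k) psi (x j) 0 k.
have rowM j : row j M = psi (x j) by apply/rowP => k; rewrite !mxE.
have [m m0 mM] := int_mx_dependent M; exists (m 0).
  apply: contrapT => /forallNP m0j; move/eqP: m0; apply; apply/rowP => j.
  by rewrite mxE; apply/eqP/negPn/negP; apply: m0j.
rewrite -[RHS](raddf0 phi) -mM mulmx_sum_row raddf_sum; apply: eq_bigr => j _.
have -> : m 0 j *: row j M = row j M *~ m 0 j by rewrite -scaler_int intz.
by rewrite raddfMz /= rowM psiK.
Qed.

End FreeZModule.

Lemma order_torsion_free (R : comNzRingType) : is_order R ->
  forall (x : R) (m : int), m != 0 -> x *~ m = 0 -> x = 0.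
Proof. by move=> [n [phi [phiB phi_bij]]]; apply: free_torsion_free phiB phi_bij. Qed.

Lemma order_dependent (R : comNzRingType) : is_order R ->
  exists n, forall x : 'I_n.+1 -> R,
    exists2 m : 'I_n.+1 -> int, (exists j, m j != 0) & \sum_j x j *~ m j = 0.
Proof. by move=> [n [phi [phiB phi_bij]]]; exists n; apply: free_dependent phiB phi_bij. Qed.

Section Decompositions.
Variables (R : comNzRingType) (A Gp : R -> Prop).
Hypothesis DAG : inD A Gp.

Lemma inD_int (k : int) : A k%:~R.
Proof.
have [[A1 [AB _]] _ _ _] := DAG; have A0 : A 0 by rewrite -(subrr 1); apply: AB.
apply: (@zcomb_ind _ (fun x => x = 1) A A0 AB) => [x -> //|].
exists [:: 1], (fun=> k); rewrite big_seq1; split=> // x.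
by rewrite inE => /eqP.
Qed.

Lemma inD_free_fin (I : finType) (x : I -> R) (a : I -> R) : injective x ->
  (forall i, Gp (x i) /\ A (a i)) -> \sum_i a i * x i = 0 -> forall i, a i = 0.
Proof.
move=> x_inj Hx S0 i; have [_ _ _ free] := DAG.
pose b r := if [pick j | x j == r] is Some j then a j else 0.
have bx j : b (x j) = a j.
  by rewrite /b; case: pickP => [j' /eqP/x_inj -> // | /(_ j)]; rewrite eqxx.
rewrite -bx; apply: (free (image x I)).
- by rewrite map_inj_uniq ?enum_uniq.
- by move=> r /mapP[j _ ->]; rewrite bx.
- by rewrite big_image /=; under eq_bigr do rewrite bx.
- by apply: map_f; rewrite mem_enum.
Qed.

(* Pairwise distinct powers of [g] would be Z-independent in [R], of finite rank. *)
Lemma inD_mu : is_order R -> (0 : R) <> 1 -> forall g, Gp g -> mu g.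
Proof.
move=> R_ord R01 g Gg; have [_ [G1 [GM GV]] _ _] := DAG.
have Gpow k : Gp (g ^+ k) by elim: k => [|k IHk]; rewrite ?expr0 // exprS; apply: GM.
have [w [_ gw]] := GV g Gg; have [N dep] := order_dependent R_ord.
suff [i [j [ij gij]]] : exists i j : 'I_N.+1, (i < j)%N /\ g ^+ i = g ^+ j.
  exact: unit_pow_mu gw ij gij.
apply: contrapT => no_coll.
have pow_inj : injective (fun j : 'I_N.+1 => g ^+ j).
  move=> i j gij; apply: val_inj; case: (ltngtP i j) => // [ij | ji].
    by case: no_coll; exists i, j.
  by case: no_coll; exists j, i.
have [m [j mj] S0] := dep (fun j => g ^+ j).
have S0' : \sum_j (m j)%:~R * g ^+ j = 0 by under eq_bigr do rewrite mulrzl.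
have := inD_free_fin pow_inj (fun j => conj (Gpow j) (inD_int (m j))) S0' j.
by move/(order_torsion_free R_ord mj)/esym.
Qed.

End Decompositions.

Section SubgroupOfUnits.
Variables (R : comNzRingType) (Gp : R -> Prop).
Hypotheses (G1 : Gp 1) (GM : forall x y, Gp x -> Gp y -> Gp (x * y)).
Hypothesis GV : forall x, Gp x -> exists y, Gp y /\ x * y = 1.

(* [Gp] written additively; the group axioms are parameters of the type
   because its [zmodType] instance is built from them. *)
Definition units_subgroup of Gp 1 & (forall x y, Gp x -> Gp y -> Gp (x * y))
  & (forall x, Gp x -> exists y, Gp y /\ x * y = 1) := {x : R | `[< Gp x >]}.
Local Notation U := (units_subgroup G1 GM GV).
HB.instance Definition _ := Choice.on U.

Lemma units_subgroupP (u : U) : Gp (val u).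
Proof. exact/asboolP/(valP u). Qed.

Definition usg_of x (Gx : Gp x) : U := Sub x (asboolT Gx).
Definition usg_one : U := usg_of G1.
Definition usg_mul (u v : U) : U := usg_of (GM (units_subgroupP u) (units_subgroupP v)).
Definition usg_inv (u : U) : U := usg_of (proj1 (projT2 (cid (GV (units_subgroupP u))))).

Lemma usg_mulA : associative usg_mul.
Proof. by move=> u v w; apply: val_inj; rewrite /= mulrA. Qed.
Lemma usg_mulC : commutative usg_mul.
Proof. by move=> u v; apply: val_inj; rewrite /= mulrC. Qed.
Lemma usg_mul1 : left_id usg_one usg_mul.
Proof. by move=> u; apply: val_inj; rewrite /= mul1r. Qed.
Lemma usg_mulV : left_inverse usg_one usg_inv usg_mul.
Proof.
by move=> u; apply: val_inj; rewrite /= mulrC (proj2 (projT2 (cid (GV (units_subgroupP u))))).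
Qed.

HB.instance Definition _ := GRing.isZmodule.Build U usg_mulA usg_mulC usg_mul1 usg_mulV.

Lemma val_usgD (u v : U) : val (u + v) = val u * val v. Proof. by []. Qed.
Lemma val_usg0 : val (0 : U) = 1. Proof. by []. Qed.
Lemma val_usgN (u : U) : val u * val (- u) = 1.
Proof. by rewrite -val_usgD subrr. Qed.

Variable A : R -> Prop.
Hypotheses (DAG : inD A Gp).

Definition coset_grading (u : U) (x : R) : Prop := exists2 a, A a & x = a * val u.

Lemma coset_gradingP : grading coset_grading.
Proof.
have [[A1 [AB AM]] _ Aspan Afree] := DAG.
have A0 : A 0 by rewrite -(subrr 1); apply: AB.
split.
- by move=> u; exists 0; rewrite ?mul0r.
- by move=> u _ _ [a Aa ->] [b Ab ->]; exists (a - b); rewrite ?mulrBl //; apply: AB.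
- move=> u v _ _ [a Aa ->] [b Ab ->]; exists (a * b); first exact: AM.
  by rewrite val_usgD mulrACA.
- move=> x; have [s [a [Ha ->]]] := Aspan x.
  exists (map (insubd (0 : U)) s), (fun u => a (val u) * val u); split.
    move=> _ /mapP[r rs ->]; split=> //; exists (a (val (insubd (0 : U) r : U))) => //.
    by rewrite insubdK; case: (Ha r rs) => // Gr _; apply/asboolP.
  rewrite big_map big_seq [RHS]big_seq; apply: eq_bigr => r rs.
  by rewrite insubdK //; apply/asboolP; case: (Ha r rs).
- move=> s y us Hy S0 u us'.
  pose c (v : U) := y v * val (- v).
  have yc v : v \in s -> A (c v) /\ y v = c v * val v.
    by move=> /Hy[a Aa yv]; rewrite /c yv -mulrA val_usgN mulr1.
  have cu : c u = 0.
    rewrite -[u](valKd (0 : U)).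
    apply: (Afree (map val s) (fun r => c (insubd (0 : U) r))); last exact: map_f.
    - by rewrite map_inj_uniq //; apply: val_inj.
    - move=> _ /mapP[v vs ->]; rewrite valKd.
      by split; [apply: units_subgroupP | case: (yc v vs)].
    - rewrite big_map -[RHS]S0 big_seq [RHS]big_seq; apply: eq_bigr => v vs.
      by rewrite valKd; case: (yc v vs) => _ ->.
  by case: (yc u us') => _ ->; rewrite cu mul0r.
Qed.

End SubgroupOfUnits.

Section InverseMap.
Variables (R : comNzRingType) (Gam : zmodType) (Rg : Gam -> R -> Prop) (d : R -> Gam).
Hypotheses (Rg_grading : grading Rg) (R01 : (0 : R) <> 1).
Hypothesis d_deg : forall z, mu z -> Rg (d z) z.
Hypothesis Rg_gen : forall c, zcomb (deg_support Rg) c.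
Variables (A Gp : R -> Prop) (G1 : Gp 1) (GM : forall x y, Gp x -> Gp y -> Gp (x * y)).
Variable GV : forall x, Gp x -> exists y, Gp y /\ x * y = 1.
Hypotheses (A1 : A 1) (Gp_mu : forall g, Gp g -> mu g).
Local Notation U := (units_subgroup G1 GM GV).
Local Notation Sg := (@coset_grading _ _ G1 GM GV A).
Local Notation usg := (usg_of G1 GM GV).
Variable F : Gam -> U.
Hypotheses (F_add : additive_map F) (F_push : is_pushforward Rg F Sg).

Let f c := val (F c).

Lemma coset_grading0 x : Sg 0 x <-> A x.
Proof.
by split=> [[a Aa ->] | Ax]; [rewrite val_usg0 mulr1 | exists x; rewrite ?val_usg0 ?mulr1].
Qed.

Lemma inverse_hom : hom_mu f.
Proof.
split=> [a b|a]; first by rewrite /f F_add val_usgD.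
by apply: Gp_mu; apply: units_subgroupP.
Qed.

Lemma inverse_deg g : Gp g -> f (d g) = g.
Proof.
move=> Gg; have : Sg (usg Gg) g by exists 1; rewrite ?mul1r.
move/F_push/(gsumP Rg_grading) => Hg; rewrite /f; suff -> : F (d g) = usg Gg by [].
apply: contrapT => /Hg; rewrite (hcomp_id _ (d_deg (Gp_mu Gg))).
exact: mu_neq0 R01 (Gp_mu Gg).
Qed.

Lemma inverse_Id0 : Id0 d f.
Proof. by split=> [|c]; [apply: inverse_hom | apply: inverse_deg; apply: units_subgroupP]. Qed.

Lemma inverse_eq1 c : f c = 1 <-> F c = 0.
Proof. by rewrite /f; split=> [fc | ->]; first apply: val_inj. Qed.

Lemma Aof_inverse : same_set (Aof Rg f) A.
Proof.
move=> x; rewrite -coset_grading0 F_push; split=> [] [s [y [Hy ->]]];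
  by exists s, y; split=> // c /Hy[/inverse_eq1 fc Ry].
Qed.

Lemma Gof_inverse : same_set (Gof f) Gp.
Proof.
move=> x; split=> [[c <-] | Gx]; first exact: units_subgroupP.
by exists (d x); apply: inverse_deg.
Qed.

Lemma inverse_GammaA a : GammaA Rg A a -> f a = 1.
Proof.
rewrite GammaAE.
apply: (eq_hom_mu_zcomb inverse_hom (hom_mu_cst1 R Gam)) => e [x [nx [Rx Ax]]].
apply/inverse_eq1; apply: contrapT => Fe; apply: nx.
have /coset_grading0/F_push/(gsumP Rg_grading) Hx := Ax.
by rewrite -(hcomp_id Rg_grading Rx); apply: Hx.
Qed.

Lemma GammaA_sub_deg c : GammaA Rg A (c - d (f c)).
Proof.
have dfB a b : d (f (a - b)) = d (f a) - d (f b).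
  have := degM Rg_grading R01 d_deg (hom_mu_mu inverse_hom (a - b)) (hom_mu_mu inverse_hom b).
  by rewrite -(hom_muD inverse_hom) subrK => ->; rewrite addrK.
rewrite GammaAE; pose Q c := zcomb (deg_supportA Rg A) (c - d (f c)).
apply: (@zcomb_ind _ _ Q _ _ _ c (Rg_gen c)); rewrite /Q.
- by rewrite (hom_mu0 inverse_hom) (deg1 Rg_grading R01 d_deg) subr0; apply: zcomb0.
- move=> a b Ha Hb; rewrite dfB.
  have -> : forall x y, a - b - (x - y) = (a - x) - (b - y).
    by move=> x y; rewrite !opprB [LHS]addrACA [RHS]addrACA (addrC (- x)).
  exact: zcombB.
move=> e [x [nx Rx]].
have [a Aa xa] : Sg (F e) x.
  apply/F_push; exists [:: e], (fun=> x); rewrite big_seq1; split=> // g.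
  by rewrite inE => /eqP ->.
have dfN : d (f (- e)) = - d (f e).
  by rewrite -sub0r dfB (hom_mu0 inverse_hom) (deg1 Rg_grading R01 d_deg) sub0r.
have {}Aa : A (x * f (- e)).
  by rewrite xa -mulrA -/(f e) -(hom_muD inverse_hom) subrr (hom_mu0 inverse_hom) mulr1.
apply: zcomb_gen; exists (x * f (- e)); split.
  by move=> x0; apply: nx; rewrite -(hom_mu_twistK inverse_hom e x) x0 mul0r.
by rewrite -dfN; split=> //; exact: (homog_twist Rg_grading d_deg inverse_Id0 Rx).
Qed.

Lemma GammaA_dG_cover c : exists a g, GammaA Rg A a /\ Gp g /\ c = a + d g.
Proof.
exists (c - d (f c)), (f c); rewrite subrK; split; first exact: GammaA_sub_deg.
by split=> //; apply: units_subgroupP.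
Qed.

Lemma GammaA_dG_trivial a g : GammaA Rg A a -> Gp g -> a = d g -> a = 0.
Proof.
move=> Aa Gg adg; have := inverse_GammaA Aa.
by rewrite adg inverse_deg // => ->; apply: deg1 Rg_grading R01 d_deg.
Qed.

Lemma inverse_GammaA_dG a g : GammaA Rg A a -> Gp g -> f (a + d g) = g.
Proof.
by move=> Aa Gg; rewrite (hom_muD inverse_hom) inverse_GammaA // inverse_deg // mul1r.
Qed.

Lemma deg_inj_Gp g h : Gp g -> Gp h -> d g = d h -> g = h.
Proof. by move=> Gg Gh dgh; rewrite -(inverse_deg Gg) dgh inverse_deg. Qed.

Lemma inverse_map_spec :
  [/\ (forall g h, Gp g -> Gp h -> d g = d h -> g = h),
      (forall c, exists a g, GammaA Rg A a /\ Gp g /\ c = a + d g),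
      (forall a g, GammaA Rg A a -> Gp g -> a = d g -> a = 0) &
      [/\ Id0 d f, same_set (Aof Rg f) A, same_set (Gof f) Gp &
          forall a g, GammaA Rg A a -> Gp g -> f (a + d g) = g]].
Proof.
split; [exact: deg_inj_Gp | exact: GammaA_dG_cover | exact: GammaA_dG_trivial | split].
- exact: inverse_Id0.
- exact: Aof_inverse.
- exact: Gof_inverse.
- exact: inverse_GammaA_dG.
Qed.

End InverseMap.

Lemma inD_inverse (R : comNzRingType) (Gam : zmodType) (Rg : Gam -> R -> Prop) (d : R -> Gam) :
  is_order R -> (0 : R) <> 1 -> universal_grading Rg -> (forall z, mu z -> Rg (d z) z) ->
  forall A Gp, inD A Gp ->
    [/\ (forall g, Gp g -> mu g),
        (forall g h, Gp g -> Gp h -> d (g * h) = d g + d h),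
        (forall g h, Gp g -> Gp h -> d g = d h -> g = h),
        (forall c, exists a g, GammaA Rg A a /\ Gp g /\ c = a + d g) /\
        (forall a g, GammaA Rg A a -> Gp g -> a = d g -> a = 0) &
        exists f, [/\ Id0 d f, same_set (Aof Rg f) A, same_set (Gof f) Gp &
           forall a g, GammaA Rg A a -> Gp g -> f (a + d g) = g]].
Proof.
move=> R_ord R01 R_univ d_deg A Gp DAG; have [Rg_grading HU] := R_univ.
have Rg_gen := universal_grading_generated Rg_grading R_univ.
have Gp_mu := inD_mu DAG R_ord R01.
have [[A1 _] [G1 [GM GV]] _ _] := DAG.
have [F [F_add F_push _]] := HU _ _ (coset_gradingP G1 GM GV DAG).
have [dinj cover triv spec] :=
  inverse_map_spec Rg_grading R01 d_deg Rg_gen A1 Gp_mu F_add F_push.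
split=> // [g h Gg Gh | ]; last by exists (fun c => val (F c)).
by apply: (degM Rg_grading R01 d_deg); apply: Gp_mu.
Qed.

Unset Implicit Arguments.

Theorem theorem6p7 (R : comNzRingType) (Gam : zmodType) (Rg : Gam -> R -> Prop)
  (d : R -> Gam) :
  is_order R -> reduced R -> connected R -> universal_grading Rg ->
  (* d : mu -> Gamma is the degree map *)
  (forall z, mu z -> Rg (d z) z) ->
  [/\
   (* well defined *)
   (forall f, Id0 d f -> inD (Aof Rg f) (Gof f)),
   (* injective *)
   (forall f g, Id0 d f -> Id0 d g ->
      same_set (Aof Rg f) (Aof Rg g) -> same_set (Gof f) (Gof g) ->
      forall c, f c = g c),
   (* order isomorphism *)
   (forall f g, Id0 d f -> Id0 d g ->
      (leId0 d f g <-> leD (Aof Rg f) (Gof f) (Aof Rg g) (Gof g))),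
   (* surjective, with the explicit inverse *)
   (forall A Gp, inD A Gp ->
      [/\ (forall g, Gp g -> mu g),
          (* d restricts to an isomorphism G -> d(G) *)
          (forall g h, Gp g -> Gp h -> d (g * h) = d g + d h),
          (forall g h, Gp g -> Gp h -> d g = d h -> g = h),
          (* Gamma = Gamma_A x d(G) *)
          (forall c, exists a g, GammaA Rg A a /\ Gp g /\ c = a + d g) /\
          (forall a g, GammaA Rg A a -> Gp g -> a = d g -> a = 0) &
          exists f, [/\ Id0 d f, same_set (Aof Rg f) A, same_set (Gof f) Gp &
             forall a g, GammaA Rg A a -> Gp g -> f (a + d g) = g]]) &
   (* respects the actions of Aut(R) *)
   (forall (sigma : {rmorphism R -> R}) (sG sGi : Gam -> Gam),
      bijective sigma ->
      additive_map sG -> cancel sG sGi -> cancel sGi sG ->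
      (forall c x, Rg c x <-> Rg (sG c) (sigma x)) ->
      forall f, Id0 d f ->
        same_set (Aof Rg (fun c => sigma (f (sGi c))))
                 (fun x => exists y, Aof Rg f y /\ x = sigma y) /\
        same_set (Gof (fun c => sigma (f (sGi c))))
                 (fun x => exists y, Gof f y /\ x = sigma y))].
Proof.
move=> R_ord _ [R01 _] R_univ d_deg; have Rg_grading := proj1 R_univ.
have Rg_gen := universal_grading_generated Rg_grading R_univ.
split.
- exact: Id0_inD.
- exact: Id0_inj.
- exact: leId0_leD.
- exact: inD_inverse.
- move=> sigma sG sGi sigma_bij _ sGK sGiK sigma_deg f _.
  by split; [apply: Aof_aut | apply: Gof_aut].
Qed.
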